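(* Let $M$ be a $\lambda$-term and $\vec x$ a list of $n$ distinct variables with $FV(M)\subseteq\vec x$. If $M$ is head-normalizable, then $\llbracket M\rrbracket_{\vec x}$ is not the zero distributor, i.e. $\llbracket M\rrbracket_{\vec x}(\Delta,a)\neq\emptyset$ for some $\Delta\in(SD)^n$, $a\in D$.
   Context: A $\lambda$-term is in head-normal form if it has the shape $\lambda y_1\dots\lambda y_m.\,y\,Q_1\cdots Q_p$; it is head-normalizable if it $\beta$-reduces to a head-normal form. $[n]=\{1,\dots,n\}$. Fix a class $\mathcal C$ of functions between finite ordinals equal to one of: all bijections, all injections, all surjections, all functions. For a small category $X$, $SX$ has finite lists of objects of $X$ as objects and morphisms $\langle x_1,\dots,x_n\rangle\to\langle y_1,\dots,y_m\rangle$ the tuples $\langle\alpha,f_1,\dots,f_m\rangle$ with $\alpha:[m]\to[n]$ in $\mathcal C$, $f_i:x_{\alpha(i)}\to y_i$; composite of $\langle\alpha,\vec f\rangle$ then $\langle\beta,\vec g\rangle$ is $\langle\alpha\circ\beta,(g_i\circ f_{\beta(i)})_i\rangle$; tensor $\oplus$ = concatenation, unit $\langle\rangle$. Fix a small category $A$. $D=D_A$ is the colimit of $D_0=A$, $D_{k+1}=(SD_k)^{o}\times D_k\sqcup A$ along canonical inclusions: objects $a::=o\mid\vec a\Rightarrow a$ ($o\in\mathrm{Ob}(A)$); morphisms are those of $A$ and $\langle\alpha,\vec f\rangle\Rightarrow f:(\vec a\Rightarrow a)\to(\vec a'\Rightarrow a')$ for $\langle\alpha,\vec f\rangle:\vec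 a'\to\vec a$ in $SD$, $f:a\to a'$. $SD=S(D_A)$. Contexts are objects of $(SD)^n$; $\otimes$ is componentwise concatenation; $\Delta\oplus\langle\vec a\rangle$ appends a component. Denotation $\llbracket M\rrbracket_{\vec x}:((SD)^n)^{o}\times D\to\mathrm{Set}$ for $\vec x=\langle x_1..x_n\rangle\supseteq FV(M)$ (functorial action from hom-functors and coends): $\llbracket x_i\rrbracket_{\vec x}(\Delta,a)=(SD)^n(\Delta,\langle\langle\rangle,\dots,\langle a\rangle,\dots,\langle\rangle\rangle)$ ($\langle a\rangle$ at position $i$); $\llbracket\lambda y.P\rrbracket_{\vec x}(\Delta,a)=\llbracket P\rrbracket_{\vec x\oplus\langle y\rangle}(\Delta\oplus\langle\vec a'\rangle,a')$ if $a=\vec a'\Rightarrow a'$, $\emptyset$ if $a$ atomic; $\llbracket PQ\rrbracket_{\vec x}(\Delta,a)=\int^{\vec a=\langle a_1..a_k\rangle\in SD}\int^{\Gamma_0..\Gamma_k\in(SD)^n}\llbracket P\rrbracket_{\vec x}(\Gamma_0,\vec a\Rightarrow a)\times\prod_{i=1}^k\llbracket Q\rrbracket_{\vec x}(\Gamma_i,a_i)\times(SD)^n(\Delta,\bigotimes_{i=0}^k\Gamma_i)$. *)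

From Stdlib Require Import Relations ClassicalEpsilon.
From HB Require Import structures.
From mathcomp Require Import all_boot all_order.

Set Implicit Arguments.
Unset Strict Implicit.
Unset Printing Implicit Defensive.

Inductive term : Type :=
| Var (v : nat)
| Lam (M : term)
| App (M N : term).

(* FV(M) is contained in a list of n variables *)
Fixpoint scoped (n : nat) (M : term) : bool :=
  match M with
  | Var v => v < n
  | Lam P => scoped n.+1 P
  | App P Q => scoped n P && scoped n Q
  end.

Fixpoint lift (d c : nat) (M : term) : term :=
  match M with
  | Var v => if v < c then Var v else Var (v + d)
  | Lam P => Lam (lift d c.+1 P)
  | App P Q => App (lift d c P) (lift d c Q)
  end.

(* subst N j M : substitute N for index j in M (N lives outside the j binders) *)
Fixpoint subst (N : term) (j : nat) (M : term) : term :=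
  match M with
  | Var v => if v == j then lift j 0 N else if j < v then Var v.-1 else Var v
  | Lam P => Lam (subst N j.+1 P)
  | App P Q => App (subst N j P) (subst N j Q)
  end.

Inductive beta : term -> term -> Prop :=
| beta_redex M N : beta (App (Lam M) N) (subst N 0 M)
| beta_appL M M' N : beta M M' -> beta (App M N) (App M' N)
| beta_appR M N N' : beta N N' -> beta (App M N) (App M N')
| beta_lam M M' : beta M M' -> beta (Lam M) (Lam M').

Definition beta_star : term -> term -> Prop := clos_refl_trans term beta.

Inductive head_var_app : term -> Prop :=
| hva_var v : head_var_app (Var v)
| hva_app M N : head_var_app M -> head_var_app (App M N).

Inductive hnf : term -> Prop :=
| hnf_head M : head_var_app M -> hnf M
| hnf_lam M : hnf M -> hnf (Lam M).

Definition head_normalizable (M : term) : Prop :=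
  exists N, beta_star M N /\ hnf N.

Record Cat : Type := {
  Ob : Type;
  Hom : Ob -> Ob -> Type;
  idm : forall x, Hom x x;
  cmp : forall x y z, Hom x y -> Hom y z -> Hom x z;  (* diagrammatic order *)
  cmp_id_l : forall x y (f : Hom x y), cmp (idm x) f = f;
  cmp_id_r : forall x y (f : Hom x y), cmp f (idm y) = f;
  cmp_assoc : forall x y z w (f : Hom x y) (g : Hom y z) (h : Hom z w),
      cmp (cmp f g) h = cmp f (cmp g h)
}.
Arguments idm {c} x.
Arguments cmp {c x y z} _ _.

Inductive Cls : Type := Cbij | Cinj | Csurj | Call.

Definition surj {m n} (f : 'I_m -> 'I_n) : Prop := forall y, exists x, f x = y.

Definition inC (c : Cls) {m n} (f : 'I_m -> 'I_n) : Prop :=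
  match c with
  | Cbij => injective f /\ surj f
  | Cinj => injective f
  | Csurj => surj f
  | Call => True
  end.

Lemma inC_id c m : inC c (fun i : 'I_m => i).
Proof.
have Hs : surj (fun i : 'I_m => i) by move=> y; exists y.
by case: c => //=; split.
Qed.

Lemma inC_comp c m1 m2 m3 (f : 'I_m1 -> 'I_m2) (g : 'I_m2 -> 'I_m3) :
  inC c f -> inC c g -> inC c (fun i => g (f i)).
Proof.
have Hs : surj f -> surj g -> surj (fun i => g (f i)).
  by move=> sf sg y; case: (sg y) => x <-; case: (sf x) => z <-; exists z.
case: c => /=.
- by case=> If Sf [Ig Sg]; split; [move=> x y /Ig /If|exact: Hs].
- by move=> If Ig x y /Ig /If.
- exact: Hs.
- by [].
Qed.

Lemma ord0_absurd (i : 'I_0) : False. Proof. by case: i. Qed.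

Section Model.
Variable A : Cat.
Variable cls : Cls.

(* objects  a ::= o | <a_1..a_k> => a   (a list is a function 'I_k -> ty) *)

Inductive ty : Type :=
| tyA (o : Ob A)
| tyArr (k : nat) (x : 'I_k -> ty) (a : ty).

(* <alpha, f> => g : (x => a) -> (x' => a')  for <alpha,f> : x' -> x in SD *)
Inductive Dhom : ty -> ty -> Type :=
| homA (o o' : Ob A) : @Hom A o o' -> Dhom (tyA o) (tyA o')
| homArr (k : nat) (x : 'I_k -> ty) (a : ty) (k' : nat) (x' : 'I_k' -> ty) (a' : ty)
    (al : 'I_k -> 'I_k') (Hal : inC cls al)
    (fs : forall i, Dhom (x' (al i)) (x i)) (g : Dhom a a') :
    Dhom (tyArr x a) (tyArr x' a').

Fixpoint Did (a : ty) : Dhom a a :=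
  match a with
  | tyA o => homA (idm o)
  | tyArr k x a' => @homArr k x a' k x a' (fun i => i) (inC_id cls k)
                      (fun i => Did (x i)) (Did a')
  end.

Definition DcompA (o' : Ob A) (a c : ty) (f : Dhom a (tyA o')) (g : Dhom (tyA o') c)
  : Dhom a c :=
  match f in Dhom a0 b0
    return (match b0 with
            | tyA o1 => Dhom b0 c -> Dhom a0 c
            | _ => unit end) with
  | homA o o1 h => fun g =>
      match g in Dhom b1 c1
        return (match b1 with
                | tyA o2 => @Hom A o o2 -> Dhom (tyA o) c1
                | _ => unit end) with
      | homA o2 o3 h' => fun h => homA (cmp h h')
      | homArr _ _ _ _ _ _ _ _ _ _ => tt
      end h
  | homArr _ _ _ _ _ _ _ _ _ _ => tt
  end g.

Definition DcompArr (k' : nat) (x' : 'I_k' -> ty) (a' : ty)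
  (recx : forall i a c, Dhom a (x' i) -> Dhom (x' i) c -> Dhom a c)
  (reca : forall a c, Dhom a a' -> Dhom a' c -> Dhom a c)
  (a c : ty) (f : Dhom a (tyArr x' a')) (g : Dhom (tyArr x' a') c) : Dhom a c :=
  match f in Dhom a0 b0
    return (match b0 with
            | tyArr k0 x0 a0' =>
                (forall i a c, Dhom a (x0 i) -> Dhom (x0 i) c -> Dhom a c) ->
                (forall a c, Dhom a a0' -> Dhom a0' c -> Dhom a c) ->
                Dhom b0 c -> Dhom a0 c
            | _ => unit end) with
  | homA _ _ _ => tt
  | homArr k x a1 k0 x0 a0' al Hal fs g0 => fun recx reca g =>
      match g in Dhom b1 c1
        return (match b1 with
                | tyArr k1 x1 a1' =>
                    forall al : 'I_k -> 'I_k1, inC cls al ->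
                    (forall i, Dhom (x1 (al i)) (x i)) -> Dhom a1 a1' ->
                    (forall i a c, Dhom a (x1 i) -> Dhom (x1 i) c -> Dhom a c) ->
                    (forall a c, Dhom a a1' -> Dhom a1' c -> Dhom a c) ->
                    Dhom (tyArr x a1) c1
                | _ => unit end) with
      | homA _ _ _ => tt
      | homArr k1 x1 a1' k2 x2 a2 be Hbe hs g1 => fun al Hal fs g0 recx reca =>
          @homArr k x a1 k2 x2 a2 (fun i => be (al i)) (inC_comp Hal Hbe)
            (fun i => recx (al i) _ _ (hs (al i)) (fs i)) (reca _ _ g0 g1)
      end al Hal fs g0 recx reca
  end recx reca g.

Fixpoint Dcomp (b : ty) {struct b} : forall a c, Dhom a b -> Dhom b c -> Dhom a c :=
  match b as b0 return forall a c, Dhom a b0 -> Dhom b0 c -> Dhom a c with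
  | tyA o' => fun a c f g => DcompA f g
  | tyArr k' x' a' => fun a c f g =>
      DcompArr (fun i => @Dcomp (x' i)) (@Dcomp a') f g
  end.
Arguments Dcomp {b a c} _ _.

(* SD = S(D_A): finite lists of objects of D                            *)

Record SOb : Type := mkSOb { slen : nat; sel : 'I_slen -> ty }.
Arguments sel : clear implicits.

(* raw morphism <alpha, f_1..f_m> : xs -> ys (no class condition) *)
Record RSHom (xs ys : SOb) : Type := mkRSHom {
  ridx : 'I_(slen ys) -> 'I_(slen xs);
  rcmp : forall i, Dhom (sel xs (ridx i)) (sel ys i) }.

Definition SHom (xs ys : SOb) : Type := { h : RSHom xs ys | inC cls (ridx h) }.

Definition RScomp xs ys zs (h : RSHom xs ys) (g : RSHom ys zs) : RSHom xs zs :=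
  @mkRSHom xs zs (fun i => ridx h (ridx g i))
    (fun i => Dcomp (rcmp h (ridx g i)) (rcmp g i)).

Definition Scomp xs ys zs (h : SHom xs ys) (g : SHom ys zs) : SHom xs zs :=
  exist _ (RScomp (proj1_sig h) (proj1_sig g))
    (inC_comp (proj2_sig g) (proj2_sig h)).

Definition RSid (xs : SOb) : RSHom xs xs :=
  @mkRSHom xs xs (fun i => i) (fun i => Did (sel xs i)).

Definition Sid (xs : SOb) : SHom xs xs := exist _ (RSid xs) (inC_id cls _).

Definition Sempty : SOb := mkSOb (fun i : 'I_0 => False_rect ty (ord0_absurd i)).
Definition Ssing (a : ty) : SOb := mkSOb (fun _ : 'I_1 => a).

Definition Ssing_hom (a a' : ty) (f : Dhom a a') : SHom (Ssing a) (Ssing a') :=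
  exist _ (@mkRSHom (Ssing a) (Ssing a') (fun i => i) (fun _ => f)) (inC_id cls _).

Definition Scat (s t : SOb) : SOb :=
  @mkSOb (slen s + slen t)
    (fun p => match split p with inl i => sel s i | inr j => sel t j end).

Lemma Scat_l (s t : SOb) (i : 'I_(slen s)) :
  sel (Scat s t) (lshift (slen t) i) = sel s i.
Proof. by rewrite /Scat /= (unsplitK (inl i)). Qed.

Lemma Scat_r (s t : SOb) (j : 'I_(slen t)) :
  sel (Scat s t) (rshift (slen s) j) = sel t j.
Proof. by rewrite /Scat /= (unsplitK (inr j)). Qed.

Definition castL (a a' b : ty) (e : a = a') (f : Dhom a b) : Dhom a' b :=
  eq_rect a (fun z => Dhom z b) f a' e.

Definition RScat (s t s' t' : SOb) (u : RSHom s s') (v : RSHom t t') :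
  RSHom (Scat s t) (Scat s' t') :=
  @mkRSHom (Scat s t) (Scat s' t')
    (fun p => match split p with
              | inl i => lshift (slen t) (ridx u i)
              | inr j => rshift (slen s) (ridx v j) end)
    (fun p =>
       match split p as sp
         return Dhom (sel (Scat s t) (match sp with
                                      | inl i => lshift (slen t) (ridx u i)
                                      | inr j => rshift (slen s) (ridx v j) end))
                     (match sp with inl i => sel s' i | inr j => sel t' j end) with
       | inl i => castL (esym (Scat_l t (ridx u i))) (rcmp u i)
       | inr j => castL (esym (Scat_r s (ridx v j))) (rcmp v j)
       end).

Definition Sbig (m : nat) (F : 'I_m -> SOb) : SOb :=
  @mkSOb (\sum_(i < m) slen (F i))
    (fun p => let s := @tagnat.sig m (fun i => slen (F i)) p in
              sel (F (tag s)) (tagged s)).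

Lemma Sbig_Rank m (F : 'I_m -> SOb) i (t : 'I_(slen (F i))) :
  sel (Sbig F) (@tagnat.Rank m (fun i => slen (F i)) i t) = sel (F i) t.
Proof. by rewrite /Sbig /= /tagnat.Rank tagnat.rankK. Qed.

Definition RSbig m (F G : 'I_m -> SOb) (u : forall i, RSHom (F i) (G i)) :
  RSHom (Sbig F) (Sbig G) :=
  @mkRSHom (Sbig F) (Sbig G)
    (fun p => let s := @tagnat.sig m (fun i => slen (G i)) p in
              @tagnat.Rank m (fun i => slen (F i)) (tag s) (ridx (u (tag s)) (tagged s)))
    (fun p => let s := @tagnat.sig m (fun i => slen (G i)) p in
              castL (esym (@Sbig_Rank m F (tag s) (ridx (u (tag s)) (tagged s))))
                    (rcmp (u (tag s)) (tagged s))).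

Definition RSreindex m m' (F : 'I_m -> SOb) (al : 'I_m' -> 'I_m) :
  RSHom (Sbig F) (Sbig (fun j => F (al j))) :=
  @mkRSHom (Sbig F) (Sbig (fun j => F (al j)))
    (fun p => let s := @tagnat.sig m' (fun j => slen (F (al j))) p in
              @tagnat.Rank m (fun i => slen (F i)) (al (tag s)) (tagged s))
    (fun p => let s := @tagnat.sig m' (fun j => slen (F (al j))) p in
              castL (esym (@Sbig_Rank m F (al (tag s)) (tagged s))) (Did _)).

Section Contexts.
Variable n : nat.

Definition ctx : Type := 'I_n -> SOb.
Definition CtxHom (D G : ctx) : Type := forall j, SHom (D j) (G j).
Definition RCtxHom (D G : ctx) : Type := forall j, RSHom (D j) (G j).
Definition raw (D G : ctx) (d : CtxHom D G) : RCtxHom D G := fun j => proj1_sig (d j).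

Definition Ccomp (D G H : ctx) (d : CtxHom D G) (e : CtxHom G H) : CtxHom D H :=
  fun j => Scomp (d j) (e j).
Definition RCcomp (D G H : ctx) (d : RCtxHom D G) (e : RCtxHom G H) : RCtxHom D H :=
  fun j => RScomp (d j) (e j).
Definition Cid (D : ctx) : CtxHom D D := fun j => Sid (D j).

Definition Ccat (D G : ctx) : ctx := fun j => Scat (D j) (G j).
Definition Cbig (m : nat) (Gs : 'I_m -> ctx) : ctx := fun j => Sbig (fun i => Gs i j).

Definition Cunit (p : nat) (a : ty) : ctx :=
  fun j => if nat_of_ord j == p then Ssing a else Sempty.

Definition Cunit_hom (p : nat) (a a' : ty) (f : Dhom a a') :
  CtxHom (Cunit p a) (Cunit p a') :=
  fun j => match nat_of_ord j == p as b
             return SHom (if b then Ssing a else Sempty) (if b then Ssing a' else Sempty) with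
           | true => Ssing_hom f
           | false => Sid Sempty
           end.
End Contexts.

Definition Cext n (D : ctx n) (s : SOb) : ctx n.+1 :=
  fun j => match unlift ord_max j with Some j' => D j' | None => s end.

Definition Cext_hom n (D D' : ctx n) (s s' : SOb) (d : CtxHom D D') (u : SHom s s') :
  CtxHom (Cext D s) (Cext D' s') :=
  fun j => match unlift ord_max j as o
             return SHom (match o with Some j' => D j' | None => s end)
                         (match o with Some j' => D' j' | None => s' end) with
           | Some j' => d j'
           | None => u
           end.

(* Distributors ((SD)^n)^op x D -> Set, given by object and morphism parts *)

Record Dist (n : nat) : Type := {
  dob : ctx n -> ty -> Type;
  dact : forall (D D' : ctx n) (a a' : ty),
      CtxHom D D' -> Dhom a a' -> dob D' a -> dob D a' }.
Arguments dob {n} d _ _.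
Arguments dact {n} d {D D' a a'} _ _ _.

Definition quot (X : Type) (R : X -> X -> Prop) : Type :=
  { P : X -> Prop | exists x, P = clos_refl_sym_trans X R x }.

Definition qclass (X : Type) (R : X -> X -> Prop) (x : X) : quot R :=
  exist _ (clos_refl_sym_trans X R x) (ex_intro _ x erefl).

Definition qrep (X : Type) (R : X -> X -> Prop) (c : quot R) : X :=
  proj1_sig (constructive_indefinite_description _ (proj2_sig c)).

Definition dist_var (n v : nat) : Dist n.
refine {| dob := fun D a => if v < n then CtxHom D (@Cunit n (n - v.+1) a) else Empty_set;
          dact := fun D D' a a' d f =>
            match v < n as b return
              (if b then CtxHom D' (@Cunit n (n - v.+1) a) else Empty_set) ->
              (if b then CtxHom D (@Cunit n (n - v.+1) a') else Empty_set) with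
            | true => fun h => Ccomp d (Ccomp h (@Cunit_hom n (n - v.+1) a a' f))
            | false => fun e => e
            end |}.
Defined.

Definition lam_ob n (P : Dist n.+1) (D : ctx n) (a : ty) : Type :=
  match a with
  | tyA _ => Empty_set
  | tyArr k x a' => dob P (Cext D (mkSOb x)) a'
  end.

Definition dist_lam n (P : Dist n.+1) : Dist n.
refine {| dob := lam_ob P;
          dact := fun D D' a1 a2 d f =>
            match f in Dhom b1 b2 return lam_ob P D' b1 -> lam_ob P D b2 with
            | homA _ _ _ => fun e => match e with end
            | homArr k x a1' k' x' a2' al Hal fs g => fun p =>
                dact P (Cext_hom d (exist _ (@mkRSHom (mkSOb x') (mkSOb x) al fs) Hal)) g p
            end |}.
Defined.

Section App.
Variable n : nat.
Variables P Q : Dist n.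

(* a representative of an element of
   \int^{a_vec} \int^{Gamma_0..Gamma_k}
     P(Gamma_0, a_vec => a) x prod_i Q(Gamma_i, a_i) x (SD)^n(Delta, Gamma_0 ⊗ ... ⊗ Gamma_k) *)
Record AppRep (D : ctx n) (a : ty) : Type := mkRep {
  ar_k : nat;
  ar_x : 'I_ar_k -> ty;
  ar_G0 : ctx n;
  ar_G : 'I_ar_k -> ctx n;
  ar_p : dob P ar_G0 (tyArr ar_x a);
  ar_q : forall i, dob Q (ar_G i) (ar_x i);
  ar_d : CtxHom D (Ccat ar_G0 (Cbig ar_G)) }.
Arguments ar_x {D a} _ _.
Arguments ar_G {D a} _ _.
Arguments ar_q {D a} _ _.

Definition arrHom k k' (x : 'I_k -> ty) (x' : 'I_k' -> ty) (a a' : ty)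
  (u : SHom (mkSOb x) (mkSOb x')) (f : Dhom a a') : Dhom (tyArr x' a) (tyArr x a') :=
  @homArr k' x' a k x a' (ridx (proj1_sig u)) (proj2_sig u) (rcmp (proj1_sig u)) f.

(* dinaturality in Gamma_0, ..., Gamma_k *)
Definition gen_ctx (D : ctx n) (a : ty) (r1 r2 : AppRep D a) : Prop :=
  exists k (x : 'I_k -> ty) (G0 G0' : ctx n) (G G' : 'I_k -> ctx n)
         (g0 : CtxHom G0 G0') (g : forall i, CtxHom (G i) (G' i))
         (p : dob P G0' (tyArr x a)) (q : forall i, dob Q (G' i) (x i))
         (d : CtxHom D (Ccat G0 (Cbig G))) (d' : CtxHom D (Ccat G0' (Cbig G'))),
    r1 = @mkRep D a k x G0 G (dact P g0 (Did _) p) (fun i => dact Q (g i) (Did _) (q i)) d /\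
    r2 = @mkRep D a k x G0' G' p q d' /\
    raw d' = RCcomp (raw d)
               (fun j => RScat (proj1_sig (g0 j))
                               (RSbig (fun i => proj1_sig (g i j)))).

(* dinaturality in a_vec *)
Definition gen_vec (D : ctx n) (a : ty) (r1 r2 : AppRep D a) : Prop :=
  exists k k' (x : 'I_k -> ty) (x' : 'I_k' -> ty) (u : SHom (mkSOb x) (mkSOb x'))
         (G0 : ctx n) (G : 'I_k -> ctx n)
         (p : dob P G0 (tyArr x' a)) (q : forall i, dob Q (G i) (x i))
         (d : CtxHom D (Ccat G0 (Cbig G)))
         (d' : CtxHom D (Ccat G0 (Cbig (fun j => G (ridx (proj1_sig u) j))))),
    r1 = @mkRep D a k x G0 G (dact P (Cid G0) (arrHom u (Did a)) p) q d /\
    r2 = @mkRep D a k' x' G0 (fun j => G (ridx (proj1_sig u) j)) p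
           (fun j => dact Q (Cid _) (rcmp (proj1_sig u) j) (q (ridx (proj1_sig u) j))) d' /\
    raw d' = RCcomp (raw d)
               (fun j => RScat (RSid (G0 j))
                               (RSreindex (fun i => G i j) (ridx (proj1_sig u)))).

Definition app_rel (D : ctx n) (a : ty) (r1 r2 : AppRep D a) : Prop :=
  gen_ctx r1 r2 \/ gen_vec r1 r2.

Definition app_ob (D : ctx n) (a : ty) : Type := quot (@app_rel D a).

Definition app_act_rep (D D' : ctx n) (a a' : ty) (d : CtxHom D D') (f : Dhom a a')
  (r : AppRep D' a) : AppRep D a' :=
  @mkRep D a' (ar_k r) (ar_x r) (ar_G0 r) (ar_G r)
    (dact P (Cid _) (arrHom (Sid (mkSOb (ar_x r))) f) (ar_p r))
    (ar_q r) (Ccomp d (ar_d r)).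

Definition dist_app : Dist n :=
  {| dob := app_ob;
     dact := fun D D' a a' d f c => qclass (@app_rel D a') (app_act_rep d f (qrep c)) |}.
End App.

(* The denotation [[M]]_{x_1..x_n}; de Bruijn index v is the variable    *)
(* at position n - v (1-based), i.e. lambda appends at the end.         *)

Fixpoint sem (M : term) (n : nat) {struct M} : Dist n :=
  match M with
  | Var v => dist_var n v
  | Lam P => dist_lam (sem P n.+1)
  | App P Q => dist_app (sem P n) (sem Q n)
  end.

End Model.

(* As in the paper, the distributor semantics is read through a system
   of non-idempotent intersection types: a judgement gives M a type a of D
   and each free variable a finite list of types, and every derivation yields an
   element of [[M]] at the context made of these lists.  Lists that are
   permutations of each other are isomorphic in SD whatever the class C is, which
   is why the typing rules may identify them.  The system enjoys subject
   expansion: a typing of M[N/x] splits into a typing of M together with one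
   typing of N for each type given to x, so typings are pulled back along
   beta-reduction.  Finally every head normal form is typable, the arguments of
   the head variable receiving the empty intersection. *)

From Stdlib Require Import List Permutation ClassicalEpsilon.
From Pilot Require Import Defs.
From Stdlib Require Import Relations.
From HB Require Import structures.
From mathcomp Require Import all_boot all_order zify.

Set Implicit Arguments.
Unset Strict Implicit.
Unset Printing Implicit Defensive.

Fixpoint subst_at (N : term) (j : nat) (M : term) : term :=
  match M with
  | Var v => if v == j then N else if j < v then Var v.-1 else Var v
  | Lam P => Lam (subst_at (Defs.lift 1 0 N) j.+1 P)
  | App P Q => App (subst_at N j P) (subst_at N j Q)
  end.

Lemma lift_term0 N c : Defs.lift 0 c N = N.
Proof.
by elim: N c => [v|P IH|P IHP Q IHQ] c /=; rewrite ?IH ?IHP ?IHQ // addn0 if_same.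
Qed.

Lemma lift_termS N c d : Defs.lift 1 c (Defs.lift d c N) = Defs.lift d.+1 c N.
Proof.
elim: N c => [v|P IH|P IHP Q IHQ] c /=; rewrite ?IH ?IHP ?IHQ //.
by case: ifP => [/= -> //|vc /=]; rewrite ifF ?addn1 ?addnS //; lia.
Qed.

Lemma subst_subst_at N j M : subst N j M = subst_at (Defs.lift j 0 N) j M.
Proof. by elim: M j => [v|P IH|P IHP Q IHQ] j /=; rewrite ?IH ?IHP ?IHQ ?lift_termS. Qed.

Lemma Permutation_flatten_map (I X : Type) (f g : I -> seq X) (s : seq I) :
  (forall i, Permutation (f i) (g i)) -> Permutation (flatten (map f s)) (flatten (map g s)).
Proof. by move=> pfg; elim: s => //= i s IH; apply: Permutation_app. Qed.

Lemma Permutation_flatten_cat (I X : Type) (f g : I -> seq X) (s : seq I) :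
  Permutation (flatten [seq f i ++ g i | i <- s]) (flatten (map f s) ++ flatten (map g s)).
Proof.
elim: s => //= i s IH; rewrite -!catA; apply: Permutation_app_head.
exact: Permutation_trans (Permutation_app_head _ IH) (Permutation_app_swap_app _ _ _).
Qed.

Lemma Permutation_cat_exchange (X : Type) (a b c d : seq X) :
  Permutation ((a ++ b) ++ (c ++ d)) ((a ++ c) ++ (b ++ d)).
Proof. by rewrite -!catA; apply/Permutation_app_head/Permutation_app_swap_app. Qed.

Lemma Forall_flatten (I X : Type) (P : X -> Prop) (f : I -> seq X) (s : seq I) :
  (forall i, Forall P (f i)) -> Forall P (flatten (map f s)).
Proof. by move=> Pf; elim: s => //= i s IH; apply/Forall_app. Qed.

Lemma Forall_tnth (X : Type) (P : X -> Prop) (s : seq X) :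
  Forall P s -> forall i, P (tnth (in_tuple s) i).
Proof.
move=> Ps i; have := ltn_ord i; rewrite (tnth_nth (tnth_default (in_tuple s) i)) /=.
move: (tnth_default _ _) (nat_of_ord i) => x0 {i}.
by elim: Ps => // x s' Px _ IH [|j] //= /IH.
Qed.

Lemma enum_ord_add m n :
  enum 'I_(m + n) = map (lshift n) (enum 'I_m) ++ map (@rshift m n) (enum 'I_n).
Proof.
apply: (inj_map val_inj); rewrite map_cat -(map_comp val (lshift n)) -(map_comp val (@rshift m n)).
rewrite (eq_map (g := val) (fun _ => erefl)) (eq_map (g := addn m \o val) (fun _ => erefl)).
by rewrite map_comp !val_enum_ord iotaD -iotaDl addn0.
Qed.

Lemma nth_flatten_enum (X : Type) (x0 : X) m (F : 'I_m -> seq X) (i : 'I_m) j :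
  j < size (F i) ->
  nth x0 (flatten [seq F k | k <- enum 'I_m]) (\sum_(k < m | k < i) size (F k) + j) =
  nth x0 (F i) j.
Proof.
elim: m F i => [|m IH] F i; first by case: i.
rewrite enum_ordSl /= big_mkcond big_ord_recl /= -map_comp.
case: (unliftP ord0 i) => [i' ->|->] /= ltj; last by rewrite big1_eq !add0n nth_cat ltj.
rewrite nth_cat ltnNge -addnA leq_addr /= addKn -(IH (F \o lift ord0) i' ltj) big_mkcond.
congr (nth _ _ (_ + _)); rewrite [RHS]big_mkcond; apply: eq_bigr => k _.
by rewrite /bump !leq0n !add1n ltnS.
Qed.

Lemma flatten_map_nil (I : eqType) (X : Type) (f : I -> seq X) (s : seq I) i :
  i \in s -> flatten (map f s) = [::] -> f i = [::].
Proof.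
elim: s => //= j s IH; rewrite in_cons => /orP [/eqP ->|/IH fi] /nilP.
  by rewrite cat_nilp => /andP [/nilP].
by rewrite cat_nilp => /andP [_ /nilP].
Qed.

Lemma map_enum_nth (X : Type) n (f : 'I_n -> X) (s : seq X) :
  size s = n -> (forall i : 'I_n, f i = nth (f i) s i) -> map f (enum 'I_n) = s.
Proof.
case: n f => [|n] f sz fs; first by rewrite enum_ord0; apply/esym/size0nil.
apply: (eq_from_nth (x0 := f ord0)); first by rewrite size_map size_enum_ord.
move=> k; rewrite size_map size_enum_ord => kn; rewrite (nth_map ord0) ?size_enum_ord //.
have -> : nth ord0 (enum 'I_n.+1) k = Ordinal kn by apply: val_inj; rewrite /= nth_enum_ord.
by rewrite fs (set_nth_default (f ord0)) ?sz.
Qed.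

Lemma nth_errorE (X : Type) (s : seq X) x0 i :
  nth_error s i = if i < size s then Some (nth x0 s i) else None.
Proof. by elim: s i => [|x s IH] [|i] //=. Qed.

Lemma nth_error_map_enum (X : Type) n (f : 'I_n -> X) (i : 'I_n) :
  nth_error (map f (enum 'I_n)) i = Some (f i).
Proof.
rewrite (nth_errorE _ (f i)) size_map size_enum_ord ltn_ord.
by rewrite (nth_map i) ?nth_ord_enum ?size_enum_ord.
Qed.

Lemma Permutation_map_enum_bij (X : Type) m n (f : 'I_m -> X) (g : 'I_n -> X) :
  Permutation [seq f i | i <- enum 'I_m] [seq g i | i <- enum 'I_n] ->
  exists2 r : 'I_n -> 'I_m, bijective r & forall i, f (r i) = g i.
Proof.
move=> /Permutation_nth_error [len [h [hinj hh]]].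
have hm (i : 'I_n) : h i < m.
  have := hh i; rewrite nth_error_map_enum (nth_errorE _ (g i)) size_map size_enum_ord.
  by case: ltnP.
pose r i := Ordinal (hm i).
have rinj : injective r by move=> i j /(congr1 val) /hinj /val_inj.
have mn : m = n.
  have size_length (s : seq X) : length s = size s by elim: s => //= x s ->.
  by move: len; rewrite !size_length (size_map f) (size_map g) !size_enum_ord.
exists r; first by apply: inj_card_bij rinj _; rewrite !card_ord mn.
by move=> i; have := hh i; rewrite -[h i]/(val (r i)) !nth_error_map_enum => -[].
Qed.

(** * Typing contexts *)

Section TypingContexts.
Variable X : Type.

Definition tctx := nat -> seq X.

Definition tc_unit (v : nat) (a : X) : tctx := fun w => if w == v then [:: a] else [::].
Definition tc_cat (G H : tctx) : tctx := fun w => G w ++ H w.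
Definition tc_big (I : Type) (s : seq I) (G : I -> tctx) : tctx :=
  fun w => flatten [seq G i w | i <- s].
Definition tc_ins (j : nat) (G : tctx) (xs : seq X) : tctx :=
  fun w => if w < j then G w else if w == j then xs else G w.-1.
Definition tc_cons (xs : seq X) (G : tctx) : tctx := fun w => if w is w'.+1 then G w' else xs.
Definition tc_del (j : nat) (G : tctx) : tctx := fun w => G (if w < j then w else w.+1).

Definition tc_perm (G H : tctx) : Prop := forall w, Permutation (G w) (H w).

Lemma tc_perm_refl G : tc_perm G G.
Proof. by []. Qed.

Lemma tc_perm_eq G H : G =1 H -> tc_perm G H.
Proof. by move=> eGH w; rewrite eGH. Qed.

Lemma tc_perm_trans G H K : tc_perm G H -> tc_perm H K -> tc_perm G K.
Proof. by move=> pGH pHK w; apply: Permutation_trans (pGH w) (pHK w). Qed.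

Lemma tc_perm_cons xs G H : tc_perm G H -> tc_perm (tc_cons xs G) (tc_cons xs H).
Proof. by move=> pGH [|w] /=. Qed.

Lemma tc_perm_cat G G' H H' :
  tc_perm G G' -> tc_perm H H' -> tc_perm (tc_cat G H) (tc_cat G' H').
Proof. by move=> pG pH w; apply: Permutation_app. Qed.

Lemma tc_perm_big I (s : seq I) (G H : I -> tctx) :
  (forall i, tc_perm (G i) (H i)) -> tc_perm (tc_big s G) (tc_big s H).
Proof. by move=> pGH w; apply: Permutation_flatten_map => i; apply: pGH. Qed.

Lemma tc_big_cat_perm I (s : seq I) (G H : I -> tctx) :
  tc_perm (tc_big s (fun i => tc_cat (G i) (H i))) (tc_cat (tc_big s G) (tc_big s H)).
Proof. by move=> w; apply: Permutation_flatten_cat. Qed.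

Lemma tc_big_flatten I J (s : seq I) (f : I -> seq J) (G : J -> tctx) :
  tc_big (flatten [seq f i | i <- s]) G =1 tc_big s (fun i => tc_big (f i) G).
Proof. by move=> w; rewrite /tc_big; elim: s => //= i s <-; rewrite map_cat flatten_cat. Qed.

Lemma tc_ins_cat j G H xs ys :
  tc_ins j (tc_cat G H) (xs ++ ys) =1 tc_cat (tc_ins j G xs) (tc_ins j H ys).
Proof. by move=> w; rewrite /tc_ins /tc_cat; case: ifP => // _; case: ifP. Qed.

Lemma tc_ins_big I j (s : seq I) (G : I -> tctx) (f : I -> seq X) :
  tc_ins j (tc_big s G) (flatten (map f s)) =1 tc_big s (fun i => tc_ins j (G i) (f i)).
Proof. by move=> w; rewrite /tc_ins /tc_big; case: (w < j) => //; case: (w == j). Qed.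

Lemma tc_big_cat I (s1 s2 : seq I) G w :
  tc_big (s1 ++ s2) G w = tc_big s1 G w ++ tc_big s2 G w.
Proof. by rewrite /tc_big map_cat flatten_cat. Qed.

Lemma tc_big_nil I (s : seq I) G w : Forall (fun i => G i w = [::]) s -> tc_big s G w = [::].
Proof. by rewrite /tc_big; elim=> //= i s' -> _ ->. Qed.

End TypingContexts.

(** * Intersection types and subject expansion *)

Section Typing.
Variable A : Cat.
Local Notation ty := (ty A).
Local Notation tctx := (tctx ty).

Definition arr_dom k (x : 'I_k -> ty) : seq ty := [seq x i | i <- enum 'I_k].

Inductive typed : term -> tctx -> ty -> Prop :=
| typed_var v a : typed (Var v) (tc_unit v a) a
| typed_lam P G k (x : 'I_k -> ty) b :
    typed P (tc_cons (arr_dom x) G) b -> typed (Lam P) G (tyArr x b)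
| typed_app P Q G k (x : 'I_k -> ty) (Gs : 'I_k -> tctx) a :
    typed P G (tyArr x a) -> (forall i, typed Q (Gs i) (x i)) ->
    typed (App P Q) (tc_cat G (tc_big (enum 'I_k) Gs)) a
| typed_perm M G H a : typed M H a -> tc_perm G H -> typed M G a.

Lemma typed_var_inv v G a : typed (Var v) G a -> tc_perm G (tc_unit v a).
Proof.
move=> tM; remember (Var v) as M eqn:eM.
elim: tM eM => [_ _ [->] //|//|//|M' G' H c _ IH pGH eM].
exact: tc_perm_trans pGH (IH eM).
Qed.

Lemma typed_lam_inv P G a : typed (Lam P) G a ->
  exists k (x : 'I_k -> ty) b, a = tyArr x b /\ typed P (tc_cons (arr_dom x) G) b.
Proof.
move=> tM; remember (Lam P) as M eqn:eM.
elim: tM eM => [//|P' G' k x b tP _ [<-]|//|M' G' H c _ IH pGH eM].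
  by exists k, x, b.
have [k [x [b' [-> tP]]]] := IH eM.
by exists k, x, b'; split; last exact: typed_perm tP (tc_perm_cons _ pGH).
Qed.

Lemma typed_app_inv P Q G a : typed (App P Q) G a ->
  exists G0 k (x : 'I_k -> ty) (Gs : 'I_k -> tctx),
    [/\ typed P G0 (tyArr x a), forall i, typed Q (Gs i) (x i)
      & tc_perm G (tc_cat G0 (tc_big (enum 'I_k) Gs))].
Proof.
move=> tM; remember (App P Q) as M eqn:eM.
elim: tM eM => [//|//|P' Q' G0 k x Gs b tP _ tQ _ [<- <-]|M' G' H c _ IH pGH eM].
  by exists G0, k, x, Gs; split => // w.
have [G0 [k [x [Gs [tP tQ pH]]]]] := IH eM.
by exists G0, k, x, Gs; split => //; exact: tc_perm_trans pGH pH.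
Qed.

Lemma typed_lift_inv N c G b : typed (Defs.lift 1 c N) G b ->
  G c = [::] /\ typed N (tc_del c G) b.
Proof.
elim: N c G b => [v|P IH|P IHP Q IHQ] c G b /=.
- set v' := if v < c then v else v + 1.
  move=> tV; have /typed_var_inv pG : typed (Var v') G b by rewrite /v'; case: ifP tV.
  have v'c : (c == v') = false by rewrite /v'; case: ifP => ?; lia.
  have v'del w : ((if w < c then w else w.+1) == v') = (w == v).
    by rewrite /v'; do 2 case: ifP => ?; lia.
  split; first by have := pG c; rewrite /tc_unit v'c => /Permutation_sym/Permutation_nil.
  apply: typed_perm (typed_var v b) _ => w.
  by have := pG (if w < c then w else w.+1); rewrite /tc_del /tc_unit v'del.
- move=> /typed_lam_inv [k [x [b' [-> /IH [Gc tP]]]]]; split => //.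
  apply/typed_lam/(typed_perm tP)/tc_perm_eq => w.
  by case: w => [|w] //; rewrite /tc_del ltnS /=; case: ifP.
- move=> /typed_app_inv [G0 [k [x [Gs [/IHP [G0c tP] tQ pG]]]]].
  have {}tQ i := IHQ c (Gs i) (x i) (tQ i).
  split.
    apply/Permutation_nil/Permutation_sym; have := pG c.
    by rewrite /tc_cat G0c tc_big_nil //; apply/Forall_forall => i _; case: (tQ i).
  by apply: typed_perm (typed_app tP (fun i => proj2 (tQ i))) _ => w; apply: pG.
Qed.

Definition typed_split M N j G a : Prop :=
  exists G0 (Gs : seq (tctx * ty)),
    [/\ typed M (tc_ins j G0 (map snd Gs)) a, Forall (fun g => typed N g.1 g.2) Gs
      & tc_perm G (tc_cat G0 (tc_big Gs fst))].

Lemma typed_split_perm M N j G H a :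
  tc_perm G H -> typed_split M N j H a -> typed_split M N j G a.
Proof.
by move=> pGH [G0 [Gs [tM tN pH]]]; exists G0, Gs; split => //; apply: tc_perm_trans pGH pH.
Qed.

Lemma typed_subst_at_var_inv v N j G a :
  typed (subst_at N j (Var v)) G a -> typed_split (Var v) N j G a.
Proof.
rewrite /=; case: eqP => [->|/eqP vj] tN.
  exists (fun _ => [::]), [:: (G, a)].
  split; [|by constructor|by move=> w; rewrite /tc_cat /tc_big /= cats0].
  apply/(typed_perm (typed_var j a))/tc_perm_eq => w.
  by rewrite /tc_ins /tc_unit; case: ltngtP.
set v' := if j < v then v.-1 else v.
have /typed_var_inv pG : typed (Var v') G a by rewrite /v'; case: ifP tN.
exists (tc_unit v' a), [::]; split => //; last by move=> w; rewrite /tc_cat /tc_big /= cats0.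
apply/(typed_perm (typed_var v a))/tc_perm_eq => w; rewrite /tc_ins /tc_unit /v'.
by case: ltnP => ?; case: ltngtP => ?; repeat case: ifP => ?; try lia.
Qed.

Lemma typed_split_lam P N j G k (x : 'I_k -> ty) b :
  typed_split P (Defs.lift 1 0 N) j.+1 (tc_cons (arr_dom x) G) b ->
  typed_split (Lam P) N j G (tyArr x b).
Proof.
move=> [G0 [Gs [tP tN pG]]].
have {}tN : Forall (fun g => g.1 0 = [::] /\ typed N (tc_del 0 g.1) g.2) Gs.
  by apply: Forall_impl tN => g /typed_lift_inv.
exists (tc_del 0 G0), [seq (tc_del 0 g.1, g.2) | g <- Gs]; split.
- rewrite -map_comp; apply/typed_lam/(typed_perm tP) => -[|w].
    have := pG 0; rewrite /tc_cat tc_big_nil ?cats0 //.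
    by apply: Forall_impl tN => g [].
  rewrite /= /tc_ins /tc_del /= ltnS eqSS.
  by case: ltngtP => // wj; rewrite prednK //; lia.
- by apply/Forall_map; apply: Forall_impl tN => g [].
- by move=> w; have := pG w.+1; rewrite /tc_cat /tc_big -map_comp.
Qed.

Lemma typed_split_app P Q N j G k (x : 'I_k -> ty) (Gs : 'I_k -> tctx) a :
  typed_split P N j G (tyArr x a) -> (forall i, typed_split Q N j (Gs i) (x i)) ->
  typed_split (App P Q) N j (tc_cat G (tc_big (enum 'I_k) Gs)) a.
Proof.
move=> [G0 [GsP [tP tNP pP]]] /choice [HQ0 /choice [HQs tQN]].
have tQ i : typed Q (tc_ins j (HQ0 i) (map snd (HQs i))) (x i) by case: (tQN i).
have pQ i : tc_perm (Gs i) (tc_cat (HQ0 i) (tc_big (HQs i) fst)) by case: (tQN i).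
exists (tc_cat G0 (tc_big (enum 'I_k) HQ0)), (GsP ++ flatten [seq HQs i | i <- enum 'I_k]).
split.
- rewrite map_cat map_flatten -map_comp.
  apply: typed_perm (typed_app tP tQ) _ => w.
  by rewrite tc_ins_cat /tc_cat tc_ins_big.
- by apply/Forall_app; split => //; apply: Forall_flatten => i; case: (tQN i).
- apply: tc_perm_trans (tc_perm_cat pP (tc_perm_big _ pQ)) _.
  apply: tc_perm_trans (tc_perm_cat (tc_perm_refl _) (tc_big_cat_perm _ _ _)) _ => w.
  by rewrite /tc_cat tc_big_cat tc_big_flatten; apply: Permutation_cat_exchange.
Qed.

Lemma typed_subst_at_inv M N j G a : typed (subst_at N j M) G a -> typed_split M N j G a.
Proof.
elim: M N j G a => [v|P IH|P IHP Q IHQ] N j G a; first exact: typed_subst_at_var_inv.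
  by move=> /typed_lam_inv [k [x [b [-> /IH]]]]; apply: typed_split_lam.
move=> /typed_app_inv [G0 [k [x [Gs [/IHP tP tQ pG]]]]].
exact: typed_split_perm pG (typed_split_app tP (fun i => IHQ _ _ _ _ (tQ i))).
Qed.

Lemma typed_redex_expand M N G a : typed (subst N 0 M) G a -> typed (App (Lam M) N) G a.
Proof.
rewrite subst_subst_at lift_term0 => /typed_subst_at_inv [G0 [Gs [tM tN pG]]].
pose g i := tnth (in_tuple Gs) i.
have gs : [seq g i | i <- enum 'I_(size Gs)] = Gs by apply: map_tnth_enum.
apply: typed_perm (@typed_app _ _ G0 _ (fun i => (g i).2) (fun i => (g i).1) a _ _) _.
- apply/typed_lam/(typed_perm tM) => -[|w] //.
  by rewrite /= /arr_dom (map_comp snd g) gs.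
- exact: Forall_tnth tN.
- by move=> w; rewrite /tc_cat /tc_big (map_comp (fun h => h.1 w) g) gs; apply: pG.
Qed.

Lemma typed_beta_expand M N G a : beta M N -> typed N G a -> typed M G a.
Proof.
move=> bMN; elim: bMN G a => {M N} [M N|M M' N _ IH|M N N' _ IH|M M' _ IH] G a.
- exact: typed_redex_expand.
- move=> /typed_app_inv [G0 [k [x [Gs [tM tN pG]]]]].
  exact: typed_perm (typed_app (IH _ _ tM) tN) pG.
- move=> /typed_app_inv [G0 [k [x [Gs [tM tN pG]]]]].
  exact: typed_perm (typed_app tM (fun i => IH _ _ (tN i))) pG.
- by move=> /typed_lam_inv [k [x [b [-> tM]]]]; apply/typed_lam/IH.
Qed.

Lemma typed_beta_star_expand M N G a : beta_star M N -> typed N G a -> typed M G a.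
Proof.
move=> bMN; elim: bMN G a => {M N} [M N /typed_beta_expand //|//|M N P _ IH1 _ IH2] G a tP.
exact/IH1/IH2.
Qed.

Lemma typed_head_var_app H a : head_var_app H -> exists G, typed H G a.
Proof.
move=> hH; elim: hH a => [v|M N _ IH] a; first by exists (tc_unit v a); apply: typed_var.
have [G tM] := IH (tyArr (fun _ : 'I_0 => a) a). (* k = 0: the argument gets no type *)
by exists (tc_cat G (tc_big (enum 'I_0) (fun _ => G))); apply: typed_app tM _ => -[].
Qed.

Lemma typed_hnf (o : Ob A) H : hnf H -> exists G a, typed H G a.
Proof.
elim=> [M /(typed_head_var_app (tyA o)) [G tM]|M _ [G [a tM]]]; first by exists G, (tyA o).
exists (tc_del 0 G), (tyArr (tnth (in_tuple (G 0))) a).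
by apply/typed_lam/(typed_perm tM) => -[|w] //; rewrite /= /arr_dom map_tnth_enum.
Qed.

Lemma typed_support M G a : typed M G a ->
  forall L, scoped L M -> forall v, L <= v -> G v = [::].
Proof.
elim=> {M G a} [v a|P G k x b _ IH|P Q G k x Gs b _ IHP _ IHQ|M G H b _ IH pGH] L /=.
- by move=> vL w Lw; rewrite /tc_unit ifF //; lia.
- by move=> sP v Lv; apply: (IH L.+1 sP v.+1).
- move=> /andP [sP sQ] v Lv; rewrite /tc_cat (IHP L sP v Lv) tc_big_nil //.
  by apply/Forall_forall => i _; apply: IHQ sQ v Lv.
- by move=> sM v Lv; apply/Permutation_nil/Permutation_sym; rewrite -(IH L sM v Lv).
Qed.

End Typing.

(** * Soundness for the distributor semantics *)

Section Semantics.
Variable A : Cat.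
Variable cls : Cls.
Local Notation ty := (ty A).
Local Notation SOb := (SOb A).

Definition Sseq (s : SOb) : seq ty := [seq sel i | i <- enum 'I_(slen s)].

Definition SOb_of_seq (l : seq ty) : SOb := mkSOb (tnth (in_tuple l)).

Lemma Sseq_SOb_of_seq l : Sseq (SOb_of_seq l) = l.
Proof. exact: map_tnth_enum. Qed.

Lemma Sseq_Sempty : Sseq (Sempty A) = [::].
Proof. by rewrite /Sseq /= enum_ord0. Qed.

Lemma Sseq_Ssing a : Sseq (Ssing a) = [:: a].
Proof. by rewrite /Sseq /= enum_ordSl enum_ord0. Qed.

Lemma Sseq_Scat s t : Sseq (Scat s t) = Sseq s ++ Sseq t.
Proof.
rewrite /Sseq /= enum_ord_add map_cat -!map_comp.
by congr (_ ++ _); apply: eq_map => i /=; [apply: Scat_l|apply: Scat_r].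
Qed.

Lemma size_Sseq s : size (Sseq s) = slen s.
Proof. by rewrite /Sseq (size_map (@sel A s)) size_enum_ord. Qed.

Lemma Sseq_Sbig m (F : 'I_m -> SOb) : Sseq (Sbig F) = flatten [seq Sseq (F i) | i <- enum 'I_m].
Proof.
apply: map_enum_nth.
  rewrite size_flatten /shape -map_comp sumnE big_map big_enum /=.
  by apply: eq_bigr => i _; rewrite size_Sseq.
move=> p; rewrite -[p](@tagnat.sig2K m (fun i => slen (F i))) Sbig_Rank tagnat.RankEsum.
rewrite (eq_bigr (fun k => size (Sseq (F k)))) => [|k _]; last by rewrite size_Sseq.
rewrite (@nth_flatten_enum _ _ _ (fun k => Sseq (F k))) ?size_Sseq //.
by rewrite /Sseq (nth_map (tagnat.sig2 p)) ?nth_ord_enum ?size_enum_ord.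
Qed.

Lemma inC_bijective c m n (r : 'I_m -> 'I_n) : bijective r -> inC c r.
Proof.
move=> rbij; have rinj := bij_inj rbij.
have rsurj : surj r by case: rbij => r' _ rK y; exists (r' y).
by case: c => //=; split.
Qed.

Lemma SHom_of_perm s t : Permutation (Sseq s) (Sseq t) -> inhabited (SHom cls s t).
Proof.
move=> /Permutation_map_enum_bij [r rbij rsel]; constructor.
exists (@mkRSHom A cls s t r (fun i => castL (esym (rsel i)) (Did cls (sel i)))).
exact: inC_bijective.
Qed.

Lemma inhabited_forall (I : Type) (P : I -> Type) :
  (forall i, inhabited (P i)) -> inhabited (forall i, P i).
Proof. by move=> hP; constructor => i; apply: (epsilon (hP i) (fun _ => True)). Qed.

Section Contexts.
Variable L : nat.

(* [sem _ L] indexes variables by levels while typing contexts use de Bruijn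
   indices: index v is the component L - v.+1, hence [rev_ord]. *)
Definition ctx_seq (D : ctx A L) : tctx ty :=
  fun v => if insub v is Some j then Sseq (D (rev_ord j)) else [::].

Definition ctx_of (G : tctx ty) : ctx A L := fun l => SOb_of_seq (G (rev_ord l)).

Lemma ctx_seq_ctx_of G : (forall v, L <= v -> G v = [::]) -> ctx_seq (ctx_of G) =1 G.
Proof.
move=> G0 v; rewrite /ctx_seq /ctx_of; case: insubP => [j _ <-|]; last by rewrite -leqNgt => /G0.
by rewrite Sseq_SOb_of_seq rev_ordK.
Qed.

Lemma ctx_seq_Ccat (D G : ctx A L) : ctx_seq (Ccat D G) =1 tc_cat (ctx_seq D) (ctx_seq G).
Proof. by move=> v; rewrite /ctx_seq /tc_cat; case: insub => // j; apply: Sseq_Scat. Qed.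

Lemma ctx_seq_Cbig m (Gs : 'I_m -> ctx A L) :
  ctx_seq (Cbig Gs) =1 tc_big (enum 'I_m) (fun i => ctx_seq (Gs i)).
Proof.
move=> v; rewrite /ctx_seq /tc_big; case: insub => [j|]; first exact: Sseq_Sbig.
by elim: (enum 'I_m).
Qed.

Lemma ctx_seq_Cunit v a : v < L -> ctx_seq (@Cunit A L (L - v.+1) a) =1 tc_unit v a.
Proof.
move=> vL w; rewrite /ctx_seq /tc_unit /Cunit; case: insubP => [j _ <-|]; last first.
  by rewrite -leqNgt => Lw; rewrite ifF //; lia.
have jL := ltn_ord j; rewrite /= (_ : (L - j.+1 == L - v.+1) = (j == v :> nat)); last by lia.
by case: eqP; rewrite ?Sseq_Ssing ?Sseq_Sempty.
Qed.

Lemma CtxHom_of_perm (D D' : ctx A L) :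
  tc_perm (ctx_seq D) (ctx_seq D') -> inhabited (CtxHom cls D D').
Proof.
move=> pD; apply: inhabited_forall => l; apply: SHom_of_perm.
by have := pD (rev_ord l); rewrite /ctx_seq valK rev_ordK.
Qed.

End Contexts.
Arguments ctx_of : clear implicits.

Lemma ctx_seq_Cext L (D : ctx A L) s : ctx_seq (Cext D s) =1 tc_cons (Sseq s) (ctx_seq D).
Proof.
rewrite /ctx_seq /Cext => -[|v] /=.
  case: insubP => [j _ j0|]; last by rewrite ltn0Sn.
  have -> : rev_ord j = ord_max by apply: val_inj; rewrite /= j0 subn1.
  by rewrite unlift_none.
case: insubP => [j vL jv|vL]; case: insubP => [j' vL' j'v|vL'] //; try lia.
move: jv j'v => /= jv j'v; case: unliftP => [k|] /(congr1 val) /=; last by lia.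
rewrite /bump leqNgt ltn_ord add0n => ek.
by congr (Sseq (D _)); apply: val_inj; rewrite /= -ek; lia.
Qed.

Lemma ctx_seq_support L (D : ctx A L) G : tc_perm (ctx_seq D) G -> forall w, L <= w -> G w = [::].
Proof.
by move=> pD w Lw; have := pD w; rewrite /ctx_seq insubN -?leqNgt // => /Permutation_nil.
Qed.

Theorem typed_sound M G a : typed M G a ->
  forall L (D : ctx A L), tc_perm (ctx_seq D) G -> inhabited (dob (sem A cls M L) D a).
Proof.
elim=> {M G a} [v a|P G k x b _ IH|P Q G k x Gs b _ IHP _ IHQ|M G H b _ IH pGH] L D pD /=.
- have vL : v < L by rewrite ltnNge; apply/negP => /(ctx_seq_support pD); rewrite /tc_unit eqxx.
  by rewrite vL; apply: CtxHom_of_perm => w; rewrite ctx_seq_Cunit //; apply: pD.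
- by apply: IH => w; rewrite ctx_seq_Cext; apply: tc_perm_cons pD w.
- have supp w : L <= w -> G w = [::] /\ forall i, Gs i w = [::].
    move=> /(ctx_seq_support pD) /nilP; rewrite /tc_cat cat_nilp => /andP [/nilP G0 /nilP Gs0].
    by split=> // i; apply: flatten_map_nil (mem_enum _ i) Gs0.
  have pG : tc_perm (ctx_seq (ctx_of L G)) G.
    by apply/tc_perm_eq/ctx_seq_ctx_of => w /supp [].
  have pGs i : tc_perm (ctx_seq (ctx_of L (Gs i))) (Gs i).
    by apply/tc_perm_eq/ctx_seq_ctx_of => w /supp [].
  have [p] := IHP L _ pG.
  have [q] := inhabited_forall (fun i => IHQ i L _ (pGs i)).
  have [d] : inhabited (CtxHom cls D (Ccat (ctx_of L G) (Cbig (fun i => ctx_of L (Gs i))))).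
    apply: CtxHom_of_perm; apply: tc_perm_trans pD _ => w.
    rewrite ctx_seq_Ccat /tc_cat ctx_seq_Cbig; apply: Permutation_sym.
    exact: (tc_perm_cat pG (tc_perm_big _ pGs) w).
  by constructor; apply: qclass; apply: mkRep p q d.
- exact: IH (tc_perm_trans pD pGH).
Qed.

End Semantics.

Theorem corollary1 (A : Cat) (cls : Cls) (HA : inhabited (Ob A))
  (n : nat) (M : term) :
  scoped n M -> head_normalizable M ->
  exists (D : ctx A n) (a : ty A), inhabited (dob (sem A cls M n) D a).
Proof.
move=> sM [N [MN hN]]; case: HA => o.
have [G [a tN]] := typed_hnf o hN.
have tM := typed_beta_star_expand MN tN.
exists (ctx_of G), a; apply: (typed_sound cls tM).
exact/tc_perm_eq/ctx_seq_ctx_of/(typed_support tM sM).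
Qed.
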